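(* Let $\mathbf{M},\bm{\Gamma}_1,\dots,\bm{\Gamma}_L$ be nonsingular $D\times D$ integer matrices that are pairwise commutative and coprime, and let $\mathbf{M}_i=\mathbf{M}\bm{\Gamma}_i$, $1\le i\le L$. Then for every unimodular $\mathbf{U}$, $\mathbf{R}=\mathbf{M}\bm{\Gamma}_1\cdots\bm{\Gamma}_L\mathbf{U}$ is an lcrm of $\mathbf{M}_1,\dots,\mathbf{M}_L$, and with $\mathbf{N}_1=\mathbf{M}\bm{\Gamma}_1$, $\mathbf{N}_i=\bm{\Gamma}_i$ ($2\le i\le L$), $\mathbf{W}_i=\mathbf{N}_1\cdots\mathbf{N}_{i-1}\mathbf{N}_{i+1}\cdots\mathbf{N}_L$, and integer matrices $\widehat{\mathbf{W}}_i$ chosen so that $\mathbf{W}_i\widehat{\mathbf{W}}_i+\mathbf{N}_i\mathbf{Q}_i=\mathbf{I}$ for some integer $\mathbf{Q}_i$ if $\mathbf{N}_i$ is not unimodular (and $\widehat{\mathbf{W}}_i=\mathbf{0}$ otherwise), every $\mathbf{m}\in\mathcal{N}(\mathbf{R})$ satisfies $\mathbf{m}=\big\langle\sum_{i=1}^L\mathbf{W}_i\widehat{\mathbf{W}}_i\langle\mathbf{m}\rangle_{\mathbf{M}_i}\big\rangle_{\mathbf{R}}$; in particular $\mathbf{m}$ is uniquely determined by its remainders modulo $\mathbf{M}_1,\dots,\mathbf{M}_L$.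
   Context: All matrices are $D\times D$ integer matrices; unimodular means integer with determinant $\pm1$. Commuting nonsingular integer matrices are coprime if all their common left (equivalently right) divisors are unimodular, where $\mathbf{A}$ is a left divisor of $\mathbf{M}$ if $\mathbf{A}^{-1}\mathbf{M}$ is integer. An lcrm of $\mathbf{M}_1,\dots,\mathbf{M}_L$ is a nonsingular integer $\mathbf{R}=\mathbf{M}_i\mathbf{P}_i$ (integer $\mathbf{P}_i$, all $i$) such that every such common right multiple equals $\mathbf{R}\mathbf{A}$ for integer $\mathbf{A}$. $\mathcal{N}(\mathbf{M})=\{\mathbf{k}\in\mathbb{Z}^D:\mathbf{k}=\mathbf{M}\mathbf{x},\ \mathbf{x}\in[0,1)^D\}$; $\langle\mathbf{m}\rangle_{\mathbf{M}}$ is the unique $\mathbf{r}\in\mathcal{N}(\mathbf{M})$ with $\mathbf{m}-\mathbf{r}\in\mathbf{M}\mathbb{Z}^D$. *)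

From HB Require Import structures.
From mathcomp Require Import all_boot all_order all_algebra.
From Stdlib Require Import ClassicalEpsilon.
Set Implicit Arguments. Unset Strict Implicit. Unset Printing Implicit Defensive.
Import Order.TTheory GRing.Theory Num.Theory.
Local Open Scope ring_scope.

Section IntMx.
Variable D : nat.
Implicit Types (A B C S : 'M[int]_D) (m r v : 'cV[int]_D).

Definition nonsingular A : bool := \det A != 0.
Definition unimodular A : bool := (\det A == 1) || (\det A == -1).
Definition left_div C A : Prop := exists X : 'M[int]_D, A = C *m X.
Definition coprime_mx A B : Prop :=
  forall C, nonsingular C -> left_div C A -> left_div C B -> unimodular C.
Definition commute_mx A B : Prop := A *m B = B *m A.

Definition is_lcrm L (Ms : 'I_L -> 'M[int]_D) (R : 'M[int]_D) : Prop :=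
  nonsingular R /\ (forall i, exists P : 'M[int]_D, R = Ms i *m P) /\
  (forall S, nonsingular S -> (forall i, exists P : 'M[int]_D, S = Ms i *m P) ->
     exists A : 'M[int]_D, S = R *m A).

Definition intmx_rat {p q : nat} (A : 'M[int]_(p, q)) : 'M[rat]_(p, q) :=
  map_mx (fun z : int => z%:~R) A.

Definition in_N A (k : 'cV[int]_D) : Prop :=
  exists x : 'cV[rat]_D, (forall i, 0 <= x i 0 /\ x i 0 < 1) /\
    intmx_rat k = intmx_rat A *m x.

Definition in_lat A v : Prop := exists x : 'cV[int]_D, v = A *m x.

Definition is_rem A m r : Prop := in_N A r /\ in_lat A (m - r).

(* <m>_A, the unique such r (chosen by epsilon; unique whenever A nonsingular) *)
Definition remv A m : 'cV[int]_D := epsilon (inhabits m) (is_rem A m).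

(* N_1 = M Gamma_1, N_i = Gamma_i (i >= 2); indices shifted to 0..L-1 *)
Definition Nmx L (M : 'M[int]_D) (Gamma : 'I_L -> 'M[int]_D) (i : 'I_L) : 'M[int]_D :=
  if val i == 0%N then M *m Gamma i else Gamma i.
Definition Wmx L (M : 'M[int]_D) (Gamma : 'I_L -> 'M[int]_D) (i : 'I_L) : 'M[int]_D :=
  \big[mulmx/1%:M]_(j < L | j != i) Nmx M Gamma j.
End IntMx.

(* Via the Smith normal form, two coprime integer matrices A, B (A nonsingular)
   complete to a unimodular matrix [A B; C E].  This gives a Bezout identity
   A X + B Y = 1 and, when A and B commute, the cancellation A P = B Q ==> B | P.
   Consequently pairwise coprime commuting factors divide any common right
   multiple through their product; the factors N_1 = M Gamma_1, N_i = Gamma_i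
   are such and multiply to M Gamma_1 ... Gamma_L, which gives the lcrm.  For the
   reconstruction, the sum agrees with m modulo every N_k: the terms i <> k are
   multiples of N_k because N_k divides W_i, and W_k What_k = 1 - N_k Q_k.
   Hence it agrees with m modulo R, and m is its remainder. *)

From HB Require Import structures.
From mathcomp Require Import all_boot all_order all_algebra.
From mathcomp Require Import ring lra zify.
From Stdlib Require Import ClassicalEpsilon.
Set Implicit Arguments. Unset Strict Implicit. Unset Printing Implicit Defensive.
Import Order.TTheory GRing.Theory Num.Theory.
Local Open Scope ring_scope.

Lemma prodD1_comm (R : pzRingType) (I : eqType) (s : seq I) (P : pred I)
    (F : I -> R) k :
    (forall i j, GRing.comm (F i) (F j)) -> uniq s -> k \in s -> P k ->
  \prod_(i <- s | P i) F i = F k * \prod_(i <- s | P i && (i != k)) F i.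
Proof.
move=> cF + ks Pk; case/splitPr: ks => s1 s2.
rewrite cat_uniq /= => /and3P[_ /norP[k_s1 _] /andP[k_s2 _]].
have drop_k s' : k \notin s' ->
    \prod_(i <- s' | P i && (i != k)) F i = \prod_(i <- s' | P i) F i.
  move=> ks'; rewrite -big_filter -[RHS]big_filter; congr bigop.
  apply: eq_in_filter => i is'.
  by rewrite andbC; case: eqP is' => // ->; rewrite (negPf ks').
rewrite !big_cat !big_cons /= Pk eqxx /= !drop_k // !mulrA.
by congr (_ * _); apply/commr_sym/commr_prod => i _; apply: cF.
Qed.

Section IntMatrixDivisibility.
Variable n : nat.
Implicit Types A B C : 'M[int]_n.

Definition ldvdmx c A (v : 'M[int]_(n, c)) := exists V, v = A *m V.

Definition bezout_mx A B := exists X Y, A *m X + B *m Y = 1%:M.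

Lemma unimodularE A : unimodular A = (A \in unitmx).
Proof. by rewrite unitmxE. Qed.

Lemma unitmx_nonsingular A : A \in unitmx -> nonsingular A.
Proof. by rewrite unitmxE /nonsingular; apply: contraTneq => ->; rewrite unitr0. Qed.

Lemma nonsingularM A B : nonsingular A -> nonsingular B -> nonsingular (A *m B).
Proof. by rewrite /nonsingular det_mulmx; apply: mulf_neq0. Qed.

Lemma ldvdmx_mulmx c A (V : 'M[int]_(n, c)) : ldvdmx A (A *m V).
Proof. by exists V. Qed.

Lemma ldvdmx_unit c A (v : 'M[int]_(n, c)) : A \in unitmx -> ldvdmx A v.
Proof. by move=> uA; exists (invmx A *m v); rewrite mulmxA mulmxV // mul1mx. Qed.

Lemma ldvdmx_trans c A B (v : 'M[int]_(n, c)) :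
  ldvdmx A B -> ldvdmx B v -> ldvdmx A v.
Proof. by case=> X -> [Y ->]; exists (X *m Y); rewrite mulmxA. Qed.

Lemma ldvdmxD c A (v w : 'M[int]_(n, c)) :
  ldvdmx A v -> ldvdmx A w -> ldvdmx A (v + w).
Proof. by case=> V -> [W ->]; exists (V + W); rewrite mulmxDr. Qed.

Lemma ldvdmxN c A (v : 'M[int]_(n, c)) : ldvdmx A v -> ldvdmx A (- v).
Proof. by case=> V ->; exists (- V); rewrite mulmxN. Qed.

Lemma ldvdmx_sum c A (I : Type) (s : seq I) (P : pred I) (F : I -> 'M[int]_(n, c)) :
  (forall i, P i -> ldvdmx A (F i)) -> ldvdmx A (\sum_(i <- s | P i) F i).
Proof.
by apply: big_ind; [exists 0; rewrite mulmx0 | apply: ldvdmxD].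
Qed.

Lemma ldvdmxMr_unit c A B (v : 'M[int]_(n, c)) :
  B \in unitmx -> ldvdmx A v -> ldvdmx (A *m B) v.
Proof.
by move=> uB [V ->]; exists (invmx B *m V); rewrite -mulmxA mulKVmx.
Qed.

Lemma coprime_mxC A B : coprime_mx A B -> coprime_mx B A.
Proof. by move=> coAB C nsC dvA dvB; apply: coAB. Qed.

Lemma bezout_coprime_mx A B : bezout_mx A B -> coprime_mx A B.
Proof.
case=> X [Y eq1] C _ [A' eqA] [B' eqB].
move: eq1; rewrite eqA eqB -!mulmxA -mulmxDr => /(congr1 determinant).
rewrite det_mulmx det1 => eq1; rewrite unimodularE unitmxE.
by apply/unitrPr; exists (\det (A' *m X + B' *m Y)).
Qed.

Lemma bezout_mxMl A B C :
  A *m C = C *m A -> bezout_mx A C -> bezout_mx B C -> bezout_mx (A *m B) C.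
Proof.
move=> cAC [X [Y eqA]] [X' [Y' eqB]].
exists (X' *m X), (A *m Y' *m X + Y).
have : A *m (B *m X' + C *m Y') *m X = A *m X by rewrite eqB mulmx1.
rewrite mulmxDr mulmxDl !mulmxA cAC => eqAB.
by rewrite mulmxDr !mulmxA addrA eqAB.
Qed.

(* The Smith form of [A B] factors it as G *m R1 with R1 the top rows of a
   unimodular R; G is then a common left divisor of A and B, hence unimodular,
   and the remaining rows of R complete [A B] to a unimodular matrix. *)
Lemma coprime_mx_completion A B : nonsingular A -> coprime_mx A B ->
  exists C E, block_mx A B C E \in unitmx.
Proof.
move=> nsA coAB.
have [L uL [R uR [d _ eqAB]]] := int_Smith_normal_form (row_mx A B).
set S := \matrix_(i, j) _ in eqAB.
pose Dg : 'M[int]_n := \matrix_(i, j) (d`_i *+ (i == j :> nat)).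
have eqSD : S = row_mx Dg 0.
  apply/matrixP => i j; rewrite mxE; case: (splitP j) => k eq_jk.
    by rewrite (_ : j = lshift n k) ?row_mxEl ?mxE //; apply: val_inj.
  rewrite (_ : j = rshift n k) ?row_mxEr ?mxE /=; last exact: val_inj.
  by rewrite ltn_eqF ?mulr0n // ltn_addr.
pose G := L *m Dg.
have eqAB' : row_mx A B = G *m usubmx R.
  by rewrite eqAB eqSD -mulmxA -{1}[R]vsubmxK mul_row_col mul0mx addr0 mulmxA.
have [eqA eqB] : A = G *m lsubmx (usubmx R) /\ B = G *m rsubmx (usubmx R).
  by apply: eq_row_mx; rewrite -mul_mx_row hsubmxK.
have uG : G \in unitmx.
  rewrite -unimodularE; apply: coAB; last 2 first.
  - by exists (lsubmx (usubmx R)).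
  - by exists (rsubmx (usubmx R)).
  move: nsA; rewrite /nonsingular eqA det_mulmx.
  by apply: contraNneq => ->; rewrite mul0r.
exists (lsubmx (dsubmx R)), (rsubmx (dsubmx R)).
have -> : block_mx A B (lsubmx (dsubmx R)) (rsubmx (dsubmx R))
          = block_mx G 0 0 1%:M *m R.
  rewrite block_mxEv !hsubmxK -{2}[R]vsubmxK mul_block_col.
  by rewrite !mul0mx mul1mx addr0 add0r eqAB'.
by rewrite unitmx_mul uR andbT unitmxE det_ublock det1 mulr1 -unitmxE.
Qed.

Lemma coprime_bezout_mx A B : nonsingular A -> coprime_mx A B -> bezout_mx A B.
Proof.
move=> nsA coAB; have [C [E uPhi]] := coprime_mx_completion nsA coAB.
move: (mulmxV uPhi); rewrite -[invmx _]submxK mulmx_block (scalar_mx_block n n 1).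
by case/eq_block_mx => eq1 _ _ _; do 2!eexists; apply: eq1.
Qed.

(* Multiplying the unimodular completion Phi = [A B; C E] on the right by
   [1 B; 0 -A] gives [A 0; C F] with F = C B - E A, so F is unimodular; then
   Phi [P; -Q] = [0; C P - E Q] = Phi [B; -A] F^-1 (C P - E Q). *)
Lemma coprime_mx_ldvd c A B (P Q : 'M[int]_(n, c)) :
  nonsingular A -> A *m B = B *m A -> coprime_mx A B ->
  A *m P = B *m Q -> ldvdmx B P.
Proof.
move=> nsA cAB coAB eqPQ.
have [C [E uPhi]] := coprime_mx_completion nsA coAB.
set Phi := block_mx A B C E in uPhi.
pose F := C *m B - E *m A.
have eqPhiF : Phi *m block_mx 1%:M B 0 (- A) = block_mx A 0 C F.
  by rewrite mulmx_block !mulmx1 !mulmx0 !addr0 !mulmxN cAB subrr.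
have uF : F \in unitmx.
  move: (congr1 determinant eqPhiF).
  rewrite det_mulmx det_ublock det_lblock det1 mul1r -scaleN1r detZ => eqdet.
  rewrite unitmxE (_ : \det F = \det Phi * (-1) ^+ n).
    by rewrite unitrM -unitmxE uPhi unitrX ?unitrN1.
  by apply: (mulIf nsA); rewrite [LHS]mulrC -eqdet; ring.
exists (invmx F *m (C *m P - E *m Q)).
suff /(can_inj (mulKmx uPhi)) : Phi *m col_mx P (- Q)
    = Phi *m (col_mx B (- A) *m (invmx F *m (C *m P - E *m Q))).
  by rewrite mul_col_mx => /eq_col_mx[].
rewrite mulmxA !mul_block_col !mulmxN eqPQ cAB !subrr -/F mul_col_mx mul0mx.
by rewrite mulmxA mulmxV // mul1mx.
Qed.

End IntMatrixDivisibility.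

Section ProductDivisibility.
Variable n : nat.
Implicit Types A B : 'M[int]_n.+1.

Lemma nonsingular_prod (I : Type) (s : seq I) (F : I -> 'M[int]_n.+1) :
  (forall i, nonsingular (F i)) -> nonsingular (\prod_(i <- s) F i).
Proof.
move=> nsF; apply: (big_ind (@nonsingular _)) => //; last exact: nonsingularM.
by rewrite /nonsingular det1 oner_eq0.
Qed.

Lemma bezout_mx_prod (I : eqType) (s : seq I) (F : I -> 'M[int]_n.+1) B :
    (forall i, GRing.comm (F i) B) -> (forall i, i \in s -> bezout_mx (F i) B) ->
  bezout_mx (\prod_(i <- s) F i) B.
Proof.
move=> cFB; elim: s => [_|a s IHs bzF].
  by rewrite big_nil; exists 1%:M, 0; rewrite mulmx1 mulmx0 addr0.
rewrite big_cons; apply: bezout_mxMl; first exact: cFB.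
  exact: bzF (mem_head a s).
by apply: IHs => i si; apply: bzF; rewrite in_cons si orbT.
Qed.

Lemma ldvdmx_prod (I : eqType) (s : seq I) (F : I -> 'M[int]_n.+1) c
    (v : 'M[int]_(n.+1, c)) :
    uniq s -> (forall i, nonsingular (F i)) ->
    (forall i j, GRing.comm (F i) (F j)) ->
    (forall i j, i != j -> bezout_mx (F i) (F j)) ->
    (forall i, i \in s -> ldvdmx (F i) v) ->
  ldvdmx (\prod_(i <- s) F i) v.
Proof.
move=> + nsF cF bzF; elim: s => [_ _|a s IHs /= /andP[a_s uniq_s] dvF].
  by exists v; rewrite big_nil mul1mx.
have [W eqW] := IHs uniq_s (fun i si => dvF i (mem_behead (s := a :: s) si)).
have [V eqV] := dvF a (mem_head a s).
have cPa : GRing.comm (\prod_(i <- s) F i) (F a).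
  by apply/commr_sym/commr_prod => i _; apply: cF.
have [T eqT] : ldvdmx (F a) W.
  apply: (coprime_mx_ldvd (nonsingular_prod _ nsF) cPa _ (etrans (esym eqW) eqV)).
  apply/bezout_coprime_mx/bezout_mx_prod => [i|i si]; first exact: cF.
  by apply: bzF; apply: contraNneq a_s => <-.
by exists T; rewrite big_cons eqW eqT mulmxA; congr (_ *m T); apply: cPa.
Qed.

End ProductDivisibility.

Section Remainders.
Variable n : nat.
Implicit Types (A : 'M[int]_n) (v r : 'cV[int]_n).

Lemma intmx_ratM p q k (A : 'M[int]_(p, q)) (B : 'M[int]_(q, k)) :
  intmx_rat (A *m B) = intmx_rat A *m intmx_rat B.
Proof. exact: map_mxM. Qed.

Lemma intmx_ratB p q (A B : 'M[int]_(p, q)) :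
  intmx_rat (A - B) = intmx_rat A - intmx_rat B.
Proof. exact: map_mxB. Qed.

Lemma intmx_rat_unit A : nonsingular A -> intmx_rat A \in unitmx.
Proof. by rewrite unitmxE det_map_mx unitfE intr_eq0. Qed.

(* Round the rational coordinates A^-1 v down to integers z; r = v - A z. *)
Lemma is_rem_exists A v : nonsingular A -> exists r, is_rem A v r.
Proof.
move=> nsA; have [y eqy] : {y | y = invmx (intmx_rat A) *m intmx_rat v} by eexists.
pose z : 'cV[int]_n := \col_i Num.floor (y i 0).
exists (v - A *m z); split; last by exists z; rewrite opprB addrC subrK.
exists (y - intmx_rat z); split.
  move=> i; rewrite !mxE; have /andP[] := floor_itv (y i 0).
  by rewrite intrD; split; lra.
rewrite mulmxBr intmx_ratB intmx_ratM eqy mulmxA mulmxV ?intmx_rat_unit ?mul1mx //.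
Qed.

(* Two remainders differ by A z with z integral, and also by A (x1 - x2) with
   x1 - x2 in (-1, 1)^n; hence z = 0. *)
Lemma is_rem_uniq A v r1 r2 :
  nonsingular A -> is_rem A v r1 -> is_rem A v r2 -> r1 = r2.
Proof.
move=> nsA [[x1 [x1_01 eq1]] [z1 eqz1]] [[x2 [x2_01 eq2]] [z2 eqz2]].
have eqr : r1 - r2 = A *m (z2 - z1).
  by rewrite mulmxBr -eqz1 -eqz2 opprB [RHS]addrC addrA subrK.
have eqx : x1 - x2 = intmx_rat (z2 - z1).
  move/(congr1 intmx_rat): eqr; rewrite intmx_ratB intmx_ratM eq1 eq2 -mulmxBr.
  by move/(can_inj (mulKmx (intmx_rat_unit nsA))).
suff eqz : z2 - z1 = 0 by apply/eqP; rewrite -subr_eq0 eqr eqz mulmx0.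
apply/matrixP => i j; rewrite (ord1 j) mxE.
move/matrixP/(_ i 0): eqx; rewrite !mxE => eqxi.
have [? ?] := x1_01 i; have [? ?] := x2_01 i.
have : z2 i 0 - z1 i 0 < 1 by rewrite -(ltr_int rat) -eqxi -[_%:~R]/(1 : rat); lra.
have : -1 < z2 i 0 - z1 i 0.
  by rewrite -(ltr_int rat) -eqxi intrN -[_%:~R]/(1 : rat); lra.
move: (z2 i 0 - z1 i 0) => w; lia.
Qed.

Lemma remv_is_rem A v : nonsingular A -> is_rem A v (remv A v).
Proof. by move=> nsA; apply: epsilon_spec; apply: is_rem_exists. Qed.

Lemma is_rem_remv A v r : nonsingular A -> is_rem A v r -> remv A v = r.
Proof. by move=> nsA; apply: is_rem_uniq nsA (remv_is_rem v nsA). Qed.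

End Remainders.

Section ChineseRemainder.
Variables (n L : nat) (M : 'M[int]_n.+1) (Gamma : 'I_L.+1 -> 'M[int]_n.+1).
Hypotheses (nsM : nonsingular M) (nsG : forall i, nonsingular (Gamma i)).
Hypotheses (cMG : forall i, commute_mx M (Gamma i))
  (cGG : forall i j, commute_mx (Gamma i) (Gamma j)).
Hypotheses (coMG : forall i, coprime_mx M (Gamma i))
  (coGG : forall i j, i != j -> coprime_mx (Gamma i) (Gamma j)).

Local Notation N := (Nmx M Gamma).
Local Notation W := (Wmx M Gamma).

Lemma Nmx0 : N ord0 = M *m Gamma ord0.
Proof. by rewrite /Nmx eqxx. Qed.

Lemma Nmx_lift i : N (lift ord0 i) = Gamma (lift ord0 i).
Proof. by []. Qed.

Lemma Nmx_nonsingular i : nonsingular (N i).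
Proof. by rewrite /Nmx; case: ifP => _; [apply: nonsingularM|]. Qed.

Lemma Nmx_comm i j : GRing.comm (N i) (N j).
Proof.
have cM l : GRing.comm M (N l).
  rewrite /Nmx; case: ifP => _; last exact: cMG.
  by apply: commrM; [apply: commr_refl | apply: cMG].
have cG k l : GRing.comm (Gamma k) (N l).
  rewrite /Nmx; case: ifP => _; last exact: cGG.
  by apply: commrM; [apply/commr_sym/cMG | apply: cGG].
rewrite {1}/Nmx; case: ifP => _; last exact: cG.
by apply/commr_sym/commrM; apply/commr_sym; [apply: cM | apply: cG].
Qed.

Lemma Nmx_coprime i j : i != j -> coprime_mx (N i) (N j).
Proof.
have coMG0 k : k != ord0 -> coprime_mx (N ord0) (Gamma k).
  move=> k0; apply/bezout_coprime_mx; rewrite Nmx0.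
  apply: bezout_mxMl; first exact: cMG.
    exact: coprime_bezout_mx.
  by apply: coprime_bezout_mx; [|apply: coGG; rewrite eq_sym].
case: (unliftP ord0 i) => [i'|] ->; case: (unliftP ord0 j) => [j'|] -> //.
- by rewrite !Nmx_lift; apply: coGG.
- by move=> i0; apply/coprime_mxC/coMG0.
- by move=> j0; rewrite Nmx_lift; apply: coMG0; rewrite eq_sym.
Qed.

Lemma ldvdmx_Nmx i : ldvdmx (N i) (M *m Gamma i).
Proof.
case: (unliftP ord0 i) => [i'|] ->; last by rewrite Nmx0; exists 1%:M; rewrite mulmx1.
by rewrite Nmx_lift cMG; apply: ldvdmx_mulmx.
Qed.

Lemma ldvdmx_Wmx i k : i != k -> ldvdmx (N k) (W i).
Proof.
move=> ik; have -> : W i = \prod_(j | j != i) N j by [].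
rewrite (prodD1_comm (k := k) Nmx_comm) ?index_enum_uniq ?mem_index_enum 1?eq_sym //.
exact: ldvdmx_mulmx.
Qed.

Lemma prod_Nmx : \prod_(i < L.+1) N i = M *m \prod_(i < L.+1) Gamma i.
Proof. by rewrite !big_ord_recl Nmx0 -!mulmxE mulmxA. Qed.

Lemma ldvdmx_prod_Nmx c (v : 'M[int]_(n.+1, c)) :
  (forall i, ldvdmx (N i) v) -> ldvdmx (M *m \prod_(i < L.+1) Gamma i) v.
Proof.
move=> dvN; rewrite -prod_Nmx; apply: ldvdmx_prod => //.
- exact: index_enum_uniq.
- exact: Nmx_nonsingular.
- exact: Nmx_comm.
- move=> i j ij; apply: coprime_bezout_mx; first exact: Nmx_nonsingular.
  exact: Nmx_coprime.
Qed.

Lemma nonsingular_lcrm U :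
  unimodular U -> nonsingular (M *m \prod_(i < L.+1) Gamma i *m U).
Proof.
rewrite unimodularE => uU.
exact/nonsingularM/unitmx_nonsingular/uU/nonsingularM/nonsingular_prod.
Qed.

Lemma is_lcrm_prod U : unimodular U ->
  is_lcrm (fun i => M *m Gamma i) (M *m \prod_(i < L.+1) Gamma i *m U).
Proof.
move=> uU; split; [exact: nonsingular_lcrm | split].
- move=> i; exists ((\prod_(j | j != i) Gamma j) *m U).
  rewrite (prodD1_comm (k := i) cGG) ?index_enum_uniq ?mem_index_enum //.
  by rewrite -!mulmxE !mulmxA.
- move=> S _ dvS; apply: ldvdmxMr_unit; first by rewrite -unimodularE.
  apply: ldvdmx_prod_Nmx => i.
  exact: ldvdmx_trans (ldvdmx_Nmx i) (dvS i).
Qed.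

Lemma remv_crt U (What : 'I_L.+1 -> 'M[int]_n.+1) (m : 'cV[int]_n.+1) :
    unimodular U ->
    (forall i, ~~ unimodular (N i) ->
       exists Q, W i *m What i + N i *m Q = 1%:M) ->
    let R := M *m \prod_(i < L.+1) Gamma i *m U in
  in_N R m -> m = remv R (\sum_i W i *m What i *m remv (M *m Gamma i) m).
Proof.
move=> uU bzW R Nm; set x := \sum_i _.
apply/esym/is_rem_remv; first exact: nonsingular_lcrm.
split => //.
apply: ldvdmxMr_unit; first by rewrite -unimodularE.
apply: ldvdmx_prod_Nmx => k; rewrite /x (bigD1 k) //= addrAC; apply: ldvdmxD; last first.
  apply: ldvdmx_sum => i ik; rewrite -mulmxA.
  exact: ldvdmx_trans (ldvdmx_Wmx ik) (ldvdmx_mulmx _ _).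
set r := remv _ m.
have dv_rm : ldvdmx (N k) (r - m).
  have [_ [z eqz]] := remv_is_rem m (nonsingularM nsM (nsG k)).
  by rewrite -opprB eqz; apply/ldvdmxN/(ldvdmx_trans (ldvdmx_Nmx k))/ldvdmx_mulmx.
have [uN|/bzW[Q eqQ]] := boolP (unimodular (N k)).
  by apply: ldvdmx_unit; rewrite -unimodularE.
have -> : W k *m What k = 1%:M - N k *m Q by rewrite -eqQ addrK.
rewrite mulmxBl mul1mx addrAC; apply: ldvdmxD => //.
by apply: ldvdmxN; rewrite -mulmxA; apply: ldvdmx_mulmx.
Qed.

End ChineseRemainder.

Theorem corollary2 (D L : nat) (M : 'M[int]_D) (Gamma : 'I_L -> 'M[int]_D)
  (hL : (0 < L)%N)
  (hM : nonsingular M) (hG : forall i, nonsingular (Gamma i))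
  (hcomMG : forall i, commute_mx M (Gamma i))
  (hcomGG : forall i j, commute_mx (Gamma i) (Gamma j))
  (hcopMG : forall i, coprime_mx M (Gamma i))
  (hcopGG : forall i j, i != j -> coprime_mx (Gamma i) (Gamma j))
  (U : 'M[int]_D) (hU : unimodular U)
  (What : 'I_L -> 'M[int]_D)
  (hWhat : forall i,
     (~~ unimodular (Nmx M Gamma i) ->
        exists Q : 'M[int]_D, Wmx M Gamma i *m What i + Nmx M Gamma i *m Q = 1%:M) /\
     (unimodular (Nmx M Gamma i) -> What i = 0)) :
  let Ms := fun i => M *m Gamma i in
  let R := M *m (\big[mulmx/1%:M]_(j < L) Gamma j) *m U in
  is_lcrm Ms R /\
  (forall m : 'cV[int]_D, in_N R m ->
     m = remv R (\sum_(i < L) Wmx M Gamma i *m What i *m remv (Ms i) m)) /\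
  (forall m m' : 'cV[int]_D, in_N R m -> in_N R m' ->
     (forall i, remv (Ms i) m = remv (Ms i) m') -> m = m').
Proof.
case: L hL => // L _ in Gamma What hG hcomMG hcomGG hcopMG hcopGG hWhat *.
case: D => [|n] in M U Gamma What hM hG hcomMG hcomGG hcopMG hcopGG hU hWhat *.
  have flat q (A B : 'M[int]_(0, q)) : A = B by rewrite !flatmx0.
  split; [split; [|split] | split].
  - by rewrite /nonsingular det_mx00 oner_eq0.
  - by exists 0; apply: flat.
  - by exists 0; apply: flat.
  - by move=> m _; apply: flat.
  - by move=> m m' _ _ _; apply: flat.
move=> Ms R.
have crt := remv_crt hM hG hcomMG hcomGG hcopMG hcopGG hU (fun i => (hWhat i).1).
split; first exact: is_lcrm_prod.
split; first exact: crt.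
move=> m m' Nm Nm' eq_rem; rewrite (crt m Nm) (crt m' Nm').
by congr remv; apply: eq_bigr => i _; rewrite eq_rem.
Qed.
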